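(* Let $v\in\mathbb N_0^N$, $\mathbb T\in\mathrm{Tab}_\lambda$ and $1\le j\le N$. Then there are elements $H_u$ ($u\in\mathbb N_0^N$, $u\trianglelefteq v$) of the Hecke algebra such that $$x^v\,\mathbb T\,\Xi_j=x^v\otimes(\mathbb TH_v)+\sum_{v'\lhd v}x^{v'}\otimes(\mathbb TH_{v'}).$$
   Context: $N\ge2$, $q,s$ indeterminates, $K=\mathbb C(q,s)$. Operators act on the right, composed left to right. $\mathcal H_N(s)$ is generated by $T_1,\dots,T_{N-1}$ with $(T_i+1)(T_i-s)=0$ and braid relations. $\lambda$ is a partition of $N$ (French convention, rows numbered bottom to top); $\mathrm{Tab}_\lambda$ = reverse standard tableaux (bijective fillings by $1,\dots,N$ strictly decreasing left to right in rows and bottom to top in columns); $\mathrm{CT}_{\mathbb T}[i]$ = column minus row of the cell of $i$; $\mathbb T^{(i,j)}$ exchanges $i,j$. $V_\lambda$ has basis $\mathrm{Tab}_\lambda$ with right action $\mathbb TT_i=s\mathbb T$ if $i,i+1$ share a row, $-\mathbb T$ if they share a column, and if $i$ is in a higher row than $i+1$, with $m=\mathrm{CT}_{\mathbb T}[i+1]-\mathrm{CT}_{\mathbb T}[i]>0$, $\mathbb TT_i=\frac{s-1}{1-s^m}\mathbb T+\frac{s(1-s^{m+1})(1-s^{m-1})}{(1-s^m)^2}\mathbb T^{(i,i+1)}$; the remaining case is determined by this formula for $\mathbb T^{(i,i+1)}$ and the quadratic relation. $\mathcal M_\lambda=K[x_1,\dots,x_N]\otimes V_\lambda$, $x^v=x_1^{v_1}\cdots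 x_N^{v_N}$. With $p^{s_i}$ = $p$ with $x_i,x_{i+1}$ exchanged: $(p\otimes u)\mathbf T_i=(1-s)\frac{x_{i+1}(p-p^{s_i})}{x_i-x_{i+1}}\otimes u+p^{s_i}\otimes uT_i$, $(p\otimes u)\mathbf w=p(qx_N,x_1,\dots,x_{N-1})\otimes uT_1\cdots T_{N-1}$, $\mathbf T_i^{-1}=s^{-1}(\mathbf T_i+1-s)$, $\Xi_j=s^{j-N}\mathbf T_{j-1}^{-1}\cdots\mathbf T_1^{-1}\mathbf w\mathbf T_{N-1}\cdots\mathbf T_j$. Orders: $v^+$ is the decreasing rearrangement of $v$; $v\preceq v'$ iff $\sum_{k\le i}v_k\le\sum_{k\le i}v'_k$ for all $i$; $v\trianglelefteq v'$ iff either $v^+\ne v'^+$ and $v^+\preceq v'^+$, or $v^+=v'^+$ and $v\preceq v'$; $v'\lhd v$ means $v'\trianglelefteq v$ and $v'\neq v$. *)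

From HB Require Import structures.
From mathcomp Require Import all_boot all_order all_fingroup all_algebra.
From mathcomp Require Import Rstruct complex.
From mathcomp Require Import mpoly.
From Stdlib Require Import ClassicalEpsilon.
Set Implicit Arguments.
Unset Strict Implicit.
Unset Printing Implicit Defensive.
Import Order.TTheory GRing.Theory.
Local Open Scope ring_scope.

(* The field K = C(q,s).                                               *)
(* C[q][s]; q is the inner indeterminate, s the outer one.             *)
Definition CC : fieldType := complex Rdefinitions.R.
Definition KK : fieldType := {fraction {poly {poly CC}}}.
Definition qK : KK := @FracField.tofrac {poly {poly CC}} (('X : {poly CC})%:P).
Definition sK : KK := @FracField.tofrac {poly {poly CC}} 'X.

(* Partitions and reverse standard tableaux (French convention).       *)
(* Conventions: the entry number k+1 (1 <= k+1 <= N) is encoded by      *)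
(* e = k : 'I_N.  A tableau assigns to each entry its cell             *)
(* (row, column), rows numbered from 0 at the bottom, columns from 0   *)
(* at the left (content = column - row is unaffected by the shift).    *)
Definition is_partition (N : nat) (lam : seq nat) : bool :=
  [&& sorted geq lam, 0%N \notin lam & sumn lam == N].

Definition is_rst (N : nat) (lam : seq nat)
    (t : {ffun 'I_N -> 'I_N * 'I_N}) : bool :=
  [&& injectiveb t,
      [forall e, ((t e).2 < nth 0%N lam (t e).1)%N],
      [forall e, forall e',
         (((t e).1 == (t e').1) && ((t e).2 < (t e').2)%N) ==> (e' < e)%N] &
      [forall e, forall e',
         (((t e).2 == (t e').2) && ((t e).1 < (t e').1)%N) ==> (e' < e)%N]].

Notation Tab N lam := {t : {ffun 'I_N -> 'I_N * 'I_N} | @is_rst N lam t}.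

Definition rowt (N : nat) (lam : seq nat) (t : Tab N lam) (e : 'I_N) : nat :=
  ((val t) e).1.
Definition colt (N : nat) (lam : seq nat) (t : Tab N lam) (e : 'I_N) : nat :=
  ((val t) e).2.
Definition CT (N : nat) (lam : seq nat) (t : Tab N lam) (e : 'I_N) : int :=
  (colt t e)%:Z - (rowt t e)%:Z.
Definition swapT (N : nat) (lam : seq nat) (t : Tab N lam) (a b : 'I_N)
  : Tab N lam := insubd t [ffun e => (val t) (tperm a b e)].

(* V_lambda, with basis Tab_lambda: coordinate vectors *)
Notation Vec K N lam := {ffun Tab N lam -> K^o}.
Definition tbasis (K : fieldType) (N : nat) (lam : seq nat) (t : Tab N lam)
  : Vec K N lam := [ffun t' => (t' == t)%:R].

(* Generators T_i, 1 <= i <= N-1, are indexed by g : 'I_N.-1 with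
   i = g+1; they involve the entries/variables lo g (= i) and
   hi g (= i+1). *)
Definition lo (N : nat) (g : 'I_N.-1) : 'I_N := widen_ord (leq_pred N) g.
Definition hi (N : nat) (g : 'I_N.-1) : 'I_N := insubd (lo g) g.+1.

Section Rep.
Variables (K : fieldType) (q s : K).

Definition tabT (N : nat) (lam : seq nat) (g : 'I_N.-1) (t : Tab N lam)
  : Vec K N lam :=
  let a := lo g in let b := hi g in
  if rowt t a == rowt t b then s *: tbasis K t
  else if colt t a == colt t b then - tbasis K t
  else if (rowt t b < rowt t a)%N then
    let m := CT t b - CT t a in
    ((s - 1) / (1 - s ^ m)) *: tbasis K t
    + (s * (1 - s ^ (m + 1)) * (1 - s ^ (m - 1)) / (1 - s ^ m) ^+ 2)
        *: tbasis K (swapT t a b)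
  else
    (* remaining case, derived from the previous formula applied to
       T^{(i,i+1)} and the quadratic relation (T_i+1)(T_i-s)=0 *)
    let m := CT t a - CT t b in
    (s - 1 - (s - 1) / (1 - s ^ m)) *: tbasis K t + tbasis K (swapT t a b).

Definition actT (N : nat) (lam : seq nat) (g : 'I_N.-1) (u : Vec K N lam)
  : Vec K N lam := \sum_(t : Tab N lam) u t *: tabT g t.

(* Elements of H_N(s): finite linear combinations of words in the
   generators; a pair (c, [:: g1; ...; gk]) stands for c T_{g1} ... T_{gk}. *)
Definition hecke (N : nat) := seq (K * seq 'I_N.-1).
Definition actH (N : nat) (lam : seq nat) (h : hecke N) (u : Vec K N lam)
  : Vec K N lam :=
  \sum_(p <- h) p.1 *: foldl (fun u g => actT g u) u p.2.

(* M_lambda = K[x_1..x_N] (x) V_lambda, as V_lambda-coordinate vectors of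
   polynomials *)
Notation Mod K N lam := {ffun Tab N lam -> {mpoly K[N]}}.
Definition tens (N : nat) (lam : seq nat) (p : {mpoly K[N]}) (u : Vec K N lam)
  : Mod K N lam := [ffun t => u t *: p].

Definition swp (N : nat) (g : 'I_N.-1) (p : {mpoly K[N]}) : {mpoly K[N]} :=
  p \mPo [tuple 'X_(tperm (lo g) (hi g) i) | i < N].
(* x_{i+1} (p - p^{s_i}) / (x_i - x_{i+1})  (an exact division) *)
Definition ddiff (N : nat) (g : 'I_N.-1) (p : {mpoly K[N]}) : {mpoly K[N]} :=
  epsilon (inhabits 0) (fun r : {mpoly K[N]} =>
    r * ('X_(lo g) - 'X_(hi g)) = 'X_(hi g) * (p - swp g p)).

Definition opT (N : nat) (lam : seq nat) (g : 'I_N.-1) (F : Mod K N lam)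
  : Mod K N lam :=
  [ffun t' => (1 - s) *: ddiff g (F t')
             + \sum_(t : Tab N lam) tabT g t t' *: swp g (F t)].
Definition opTinv (N : nat) (lam : seq nat) (g : 'I_N.-1) (F : Mod K N lam)
  : Mod K N lam := s^-1 *: (opT g F + (1 - s) *: F).

(* p(q x_N, x_1, ..., x_{N-1}) *)
Definition shiftq (N : nat) (p : {mpoly K[N]}) : {mpoly K[N]} :=
  p \mPo [tuple (if (i : nat) == 0%N then q *: 'X_(rev_ord i)
                 else 'X_(insubd i i.-1)) | i < N].
Definition allT (N : nat) (lam : seq nat) (u : Vec K N lam) : Vec K N lam :=
  foldl (fun u g => actT g u) u (enum 'I_N.-1).
Definition opw (N : nat) (lam : seq nat) (F : Mod K N lam) : Mod K N lam :=
  [ffun t' => \sum_(t : Tab N lam) allT (tbasis K t) t' *: shiftq (F t)].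

(* Xi_j, j = jj+1 (jj : 'I_N):
   F Xi_j = s^{j-N} (((F T_{j-1}^{-1}) ... T_1^{-1}) w) T_{N-1} ... T_j *)
Definition opXi (N : nat) (lam : seq nat) (jj : 'I_N) (F : Mod K N lam)
  : Mod K N lam :=
  s ^- (N - jj.+1) *:
    foldl (fun F g => opT g F)
      (opw (foldl (fun F g => opTinv g F) F
              (rev [seq g : 'I_N.-1 <- enum 'I_N.-1 | (g < jj)%N])))
      (rev [seq g : 'I_N.-1 <- enum 'I_N.-1 | (jj <= g)%N]).
End Rep.


Definition mseq (N : nat) (m : 'X_{1..N}) : seq nat := [seq m i | i <- enum 'I_N].
Definition dom (N : nat) (a b : seq nat) : bool :=
  [forall i : 'I_N.+1, (sumn (take i a) <= sumn (take i b))%N].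
Definition decr (a : seq nat) : seq nat := sort geq a.
Definition tle (N : nat) (v' v : 'X_{1..N}) : bool :=
  let a := mseq v' in let b := mseq v in
  if decr a != decr b then dom N (decr a) (decr b) else dom N a b.
Definition tlt (N : nat) (v' v : 'X_{1..N}) : bool := tle v' v && (v' != v).

From Pilot Require Import Defs.
From HB Require Import structures.
From mathcomp Require Import all_boot all_order all_fingroup all_algebra.
From mathcomp Require Import mpoly.
From mathcomp Require Import zify ring.
From Stdlib Require Import ClassicalEpsilon.
(* Each factor of Xi_j sends x^m (x) u to terms x^m' (x) u' with u' obtained
   from u by the T_i, so u' stays in T H_N(s). The cyclic shift w only rotates
   exponents, while T_i produces x^(s_i m) (x) u T_i together with (1 - s)
   times the divided difference x_(i+1) (x^m - x^(s_i m)) / (x_i - x_(i+1)).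
   The latter is a geometric sum of monomials whose exponents at i, i+1 are
   (m_(i+1), m_i), possibly (m_i, m_(i+1)), or a pair with the same sum lying
   strictly between them; such a pair lowers the decreasing rearrangement
   strictly in dominance.
   Along Xi_j the exponent starting at position j travels down to position 1,
   around to N and back to j. Measuring every monomial after moving that
   exponent back to j, each factor keeps the monomials below v: intermediate
   pairs lower the rearrangement, swapped pairs follow the travelling exponent,
   and the unswapped term survives only when the two exponents are ordered so
   that the measured vector drops in the dominance order. *)

Set Implicit Arguments.
Unset Strict Implicit.
Unset Printing Implicit Defensive.

Lemma sumn_take_big (s : seq nat) i : i <= size s ->
  sumn (take i s) = \sum_(0 <= k < i) nth 0%N s k.
Proof.
elim: i => [|i IH] hi; first by rewrite take0 big_geq.
by rewrite (take_nth 0%N) // sumn_rcons IH ?(ltnW hi) // big_nat_recr.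
Qed.

Lemma big_nat_pick2 n (F : nat -> nat) i k : i != k -> i < n -> k < n ->
  \sum_(0 <= x < n) F x
  = \sum_(0 <= x < n | (x != i) && (x != k)) F x + F i + F k.
Proof.
move=> ne hi hk.
suff split_prefix : forall p, \sum_(0 <= x < p) F x =
   \sum_(0 <= x < p | (x != i) && (x != k)) F x + (i < p) * F i + (k < p) * F k.
  by rewrite split_prefix hi hk !mul1n.
elim=> [|p IH]; first by rewrite !big_geq.
rewrite [in RHS]big_mkcond !big_nat_recr //= -[in RHS]big_mkcond IH /=.
case: (eqVneq p i) => [e1|n1]; case: (eqVneq p k) => [e2|n2].
- by move: ne; rewrite -e1 -e2 eqxx.
- by subst p; rewrite ?eqxx ?ne ?andbF /=; lia.
- by subst p; rewrite ?eqxx ?ne ?andbF /=; lia.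
- by rewrite ?n1 ?n2 /=; lia.
Qed.

(** * Dominance and decreasing rearrangements *)

Lemma geqn_total : total geq. Proof. by move=> x y; rewrite /= leq_total. Qed.
Lemma geqn_trans : transitive geq.
Proof. by move=> x y z /= h1 h2; exact: leq_trans h2 h1. Qed.
Lemma geqn_anti : antisymmetric geq.
Proof. by move=> x y /andP[/= h1 h2]; apply/eqP; rewrite eqn_leq h1 h2. Qed.

Lemma decr_perm a b : perm_eq a b -> decr a = decr b.
Proof. by move/perm_sortP; apply; [exact: geqn_total|exact: geqn_trans|exact: geqn_anti]. Qed.

Lemma perm_decr a : perm_eq (decr a) a.
Proof. by rewrite /decr perm_sort. Qed.

Lemma count_decr a (P : pred nat) : count P (decr a) = count P a.
Proof. exact/seq.permP/perm_decr. Qed.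

Lemma size_decr a : size (decr a) = size a.
Proof. exact: size_sort. Qed.

Lemma sumn_decr a : sumn (decr a) = sumn a.
Proof. exact/perm_sumn/perm_decr. Qed.

Lemma sorted_decr a : sorted geq (decr a).
Proof. exact: (sort_sorted geqn_total). Qed.

Section Dominance.
Variable N : nat.

Lemma dom_refl a : Defs.dom N a a.
Proof. by apply/forallP. Qed.

Lemma dom_trans a b c : Defs.dom N a b -> Defs.dom N b c -> Defs.dom N a c.
Proof.
by move=> /forallP h1 /forallP h2; apply/forallP => i; exact: leq_trans (h1 i) (h2 i).
Qed.

Lemma dom_anti a b : size a = N -> size b = N ->
  Defs.dom N a b -> Defs.dom N b a -> a = b.
Proof.
move=> sa sb /forallP h1 /forallP h2.
have eq_psum i : i <= N ->
    \sum_(0 <= k < i) nth 0%N a k = \sum_(0 <= k < i) nth 0%N b k.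
  move=> hi; have := h1 (Ordinal (hi : i < N.+1)); have := h2 (Ordinal (hi : i < N.+1)).
  by rewrite /= !sumn_take_big ?sa ?sb //; lia.
apply: (eq_from_nth (x0 := 0%N)); first by rewrite sa sb.
move=> i; rewrite sa => hi.
by have := eq_psum i.+1 hi; have := eq_psum i (ltnW hi); rewrite !big_nat_recr //=; lia.
Qed.

End Dominance.

(** Dominance of decreasing rearrangements is read off threshold counts: for a
    decreasing sequence, the sum of its first [k] entries is
    [\sum_t minn k #{entries > t}]. *)

Lemma sum_ltn_bound M x : x <= M -> \sum_(0 <= t < M) (t < x) = x.
Proof.
have gen n : \sum_(0 <= t < n) (t < x) = minn x n.
  elim: n => [|n IH]; first by rewrite big_geq // minn0.
  by rewrite big_nat_recr //= IH; lia.
by move=> h; rewrite gen; lia.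
Qed.

Lemma sumn_take_thresholds (s : seq nat) k M :
  sorted geq s -> (forall x, x \in s -> x <= M) ->
  sumn (take k s) = \sum_(0 <= t < M) minn k (count (fun y => t < y) s).
Proof.
elim: s k => [|x s IH] k hs hM.
  by rewrite /= big1 // => t _; rewrite minn0.
case: k => [|k]; first by rewrite /= big1 // => t _; rewrite min0n.
have hs' : sorted geq s := path_sorted hs.
have hall : all (geq x) s := order_path_min geqn_trans hs.
rewrite /= (IH k hs'); last by move=> y hy; apply: hM; rewrite inE hy orbT.
have hxM : x <= M by apply: hM; rewrite inE eqxx.
rewrite -{1}(sum_ltn_bound hxM) -big_split /=; apply: eq_bigr => t _.
case: (ltnP t x) => htx; first by rewrite add1n; lia.
have -> : count (fun y => t < y) s = 0%N.
  apply/eqP; rewrite -leqn0 leqNgt -has_count; apply/hasPn => y hy.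
  by move/allP: hall => /(_ y hy) /= hyx; lia.
by rewrite !minn0.
Qed.

Definition thr_sum (R : nat -> nat) M k x y :=
  \sum_(0 <= t < M) minn k (R t + (t < x) + (t < y)).

Lemma thr_sum_sym R M k x y : thr_sum R M k x y = thr_sum R M k y x.
Proof. by apply: eq_bigr => t _; rewrite addnAC. Qed.

Lemma thr_sum_step R M k c d : {homo R : t t' / t <= t' >-> t' <= t} ->
  d <= c -> 0 < d -> c < M -> thr_sum R M k c d <= thr_sum R M k c.+1 d.-1.
Proof.
move=> hR hdc hd hcM.
have change_at p : \sum_(0 <= t < p) minn k (R t + (t < c.+1) + (t < d.-1))
    + (d.-1 < p) * minn k (R d.-1 + 2) + (c < p) * minn k (R c)
  = \sum_(0 <= t < p) minn k (R t + (t < c) + (t < d))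
    + (d.-1 < p) * minn k (R d.-1 + 1) + (c < p) * minn k (R c + 1).
  elim: p => [|p IH]; first by rewrite !big_geq.
  rewrite !big_nat_recr //=.
  by move: IH; case: (eqVneq p c) => [->|nc]; last case: (eqVneq p d.-1) => [->|nd]; lia.
by have := change_at M; have := hR _ _ (leq_trans (leq_pred d) hdc); rewrite /thr_sum; lia.
Qed.

Lemma thr_sum_spread R M k c d n : {homo R : t t' / t <= t' >-> t' <= t} ->
  d <= c -> n <= d -> c + n <= M -> thr_sum R M k c d <= thr_sum R M k (c + n) (d - n).
Proof.
move=> hR hdc; elim: n => [|n IH] hnd hcM; first by rewrite addn0 subn0.
apply: leq_trans (IH _ _) _; [lia|lia|].
rewrite addnS subnS; apply: thr_sum_step => //; lia.
Qed.

(** * Exponent vectors *)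

Section Exponents.
Variable N : nat.
Implicit Types m : 'X_{1..N}.

Definition mnm_at m (x : nat) : nat := nth 0%N (mseq m) x.

Lemma size_mseq m : size (mseq m) = N.
Proof. by rewrite /mseq size_map size_enum_ord. Qed.

Lemma mnm_at_ord m (i : 'I_N) : mnm_at m i = m i.
Proof. by rewrite /mnm_at /mseq (nth_map i) ?size_enum_ord // nth_ord_enum. Qed.

Lemma mseqE m : mseq m = map (mnm_at m) (iota 0 N).
Proof.
by rewrite /mseq -val_enum_ord -map_comp; apply: eq_map => i /=; rewrite mnm_at_ord.
Qed.

Lemma mnm_atP m1 m2 : (forall x, x < N -> mnm_at m1 x = mnm_at m2 x) -> m1 = m2.
Proof. by move=> h; apply/mnmP => i; rewrite -!mnm_at_ord h. Qed.

Lemma mnm_at_le_sumn m x : mnm_at m x <= sumn (mseq m).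
Proof.
rewrite /mnm_at; elim: (mseq m) x => [|y s IH] [|x] //=; first by lia.
by have := IH x; lia.
Qed.

Lemma mnm_atD m1 m2 x : x < N -> mnm_at (m1 + m2)%MM x = (mnm_at m1 x + mnm_at m2 x)%N.
Proof. by move=> hx; rewrite -[x]/(nat_of_ord (Ordinal hx)) !mnm_at_ord mnmDE. Qed.

Lemma mnm_at_mulUn (i : 'I_N) c x : x < N ->
  mnm_at (U_(i) *+ c)%MM x = (((i : nat) == x) * c)%N.
Proof. by move=> hx; rewrite -[x]/(nat_of_ord (Ordinal hx)) !mnm_at_ord mulmnE mnm1E. Qed.

Lemma mdeg_sumn m : mdeg m = sumn (mseq m).
Proof.
rewrite mdegE (eq_bigr (fun i : 'I_N => mnm_at m i)); last by move=> i _; rewrite mnm_at_ord.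
rewrite -(big_mkord xpredT (fun i => mnm_at m i)) -(take_size (mseq m)) size_mseq.
by rewrite sumn_take_big ?size_mseq.
Qed.

Definition mnm_psum m i := \sum_(0 <= k < i) mnm_at m k.

Lemma dom_mseqP m1 m2 : reflect (forall i, i <= N -> mnm_psum m1 i <= mnm_psum m2 i)
  (Defs.dom N (mseq m1) (mseq m2)).
Proof.
apply: (iffP forallP) => h i.
  move=> hi; have := h (Ordinal (hi : i < N.+1)).
  by rewrite !sumn_take_big ?size_mseq.
by rewrite !sumn_take_big ?size_mseq; [apply: h| |]; rewrite -ltnS.
Qed.

Lemma tle_refl m : tle m m.
Proof. by rewrite /tle eqxx /=; apply: dom_refl. Qed.

Lemma tle_mdeg (w m : 'X_{1..N}) : tle w m -> mdeg w <= mdeg m.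
Proof.
rewrite /tle !mdeg_sumn => h.
have hN : N < N.+1 by [].
case: ifP h => _ /forallP /(_ (Ordinal hN)) /=.
  by rewrite !take_oversize ?size_decr ?size_mseq // !sumn_decr.
by rewrite !take_oversize ?size_mseq.
Qed.

Lemma tle_trans_same_decr (x y w : 'X_{1..N}) : decr (mseq x) = decr (mseq y) ->
  Defs.dom N (mseq x) (mseq y) -> tle y w -> tle x w.
Proof. by rewrite /tle => -> hd; case: ifP => // _; apply: dom_trans. Qed.

Lemma tle_trans_lt_decr (x y w : 'X_{1..N}) : decr (mseq x) != decr (mseq y) ->
  Defs.dom N (decr (mseq x)) (decr (mseq y)) -> tle y w -> tle x w.
Proof.
rewrite /tle => hne hd.
case: ifP => [/negbTE hyw|/negbFE/eqP hyw] h; last by rewrite -hyw hne.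
have -> : decr (mseq x) != decr (mseq w).
  apply/eqP => exw; move: hyw; rewrite -exw.
  rewrite (dom_anti _ _ hd) ?eqxx // ?size_decr ?size_mseq //.
  by move: h; rewrite -exw.
exact: dom_trans hd h.
Qed.

Definition mnm_reindex (f : nat -> nat) m : 'X_{1..N} := [multinom mnm_at m (f i) | i < N].

Lemma mnm_at_reindex f m x : x < N -> mnm_at (mnm_reindex f m) x = mnm_at m (f x).
Proof. by move=> lt; rewrite -[x]/(nat_of_ord (Ordinal lt)) mnm_at_ord mnmE. Qed.

Lemma mnm_reindex_comp f g m : (forall x, x < N -> f x < N) ->
  mnm_reindex f (mnm_reindex g m) = mnm_reindex (fun x => g (f x)) m.
Proof. by move=> hf; apply: mnm_atP => x lt; rewrite !mnm_at_reindex ?hf. Qed.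

Lemma mnm_reindex_ext f f' m : (forall x, x < N -> f x = f' x) ->
  mnm_reindex f m = mnm_reindex f' m.
Proof. by move=> h; apply: mnm_atP => x hx; rewrite !mnm_at_reindex // h. Qed.

Lemma mnm_reindex_id f m : (forall x, x < N -> f x = x) -> mnm_reindex f m = m.
Proof. by move=> hf; apply: mnm_atP => x lt; rewrite mnm_at_reindex ?hf. Qed.

Lemma decr_mnm_reindex f g m : (forall x, x < N -> f x < N) -> (forall x, x < N -> g x < N) ->
  (forall x, x < N -> g (f x) = x) -> (forall x, x < N -> f (g x) = x) ->
  decr (mseq (mnm_reindex f m)) = decr (mseq m).
Proof.
move=> hf hg hgf hfg; apply: decr_perm; rewrite !mseqE.
have -> : map (mnm_at (mnm_reindex f m)) (iota 0 N) = map (mnm_at m) (map f (iota 0 N)).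
  rewrite -map_comp; apply/eq_in_map => x; rewrite mem_iota add0n /= => hx.
  exact: mnm_at_reindex.
apply: perm_map; apply: uniq_perm; last 2 first.
- exact: iota_uniq.
- move=> x; apply/mapP/idP => [[y]|].
    by rewrite !mem_iota !add0n /= => hy ->; apply: hf.
  rewrite mem_iota add0n /= => hx; exists (g x); last by rewrite hfg.
  by rewrite mem_iota add0n hg.
rewrite map_inj_in_uniq ?iota_uniq // => x y; rewrite !mem_iota !add0n /= => hx hy e.
by rewrite -(hgf x hx) e hgf.
Qed.

Definition transp (p r x : nat) : nat := if x == p then r else if x == r then p else x.

Lemma transpK p r : involutive (transp p r).
Proof. by move=> x; rewrite /transp; repeat case: eqP; lia. Qed.

Lemma transp_lt p r x : p < N -> r < N -> x < N -> transp p r x < N.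
Proof. by rewrite /transp; repeat case: eqP; lia. Qed.

Lemma decr_reindex_transp p r m : p < N -> r < N ->
  decr (mseq (mnm_reindex (transp p r) m)) = decr (mseq m).
Proof.
by move=> hp hr; apply: (decr_mnm_reindex (g := transp p r)) => x hx;
  rewrite ?transp_lt ?transpK.
Qed.

(* The swap puts the smaller entry first, lowering exactly the partial sums
   over the prefixes that contain position [p] but not [r]. *)
Lemma dom_reindex_transp p r m : p < r -> r < N -> mnm_at m r <= mnm_at m p ->
  Defs.dom N (mseq (mnm_reindex (transp p r) m)) (mseq m).
Proof.
move=> hpr hr hle; apply/dom_mseqP => i hi.
have psum_transp n : n <= N ->
    mnm_psum (mnm_reindex (transp p r) m) n + ((p < n) && (n <= r)) * mnm_at m p
  = mnm_psum m n + ((p < n) && (n <= r)) * mnm_at m r.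
  elim: n => [|n IH] hn; first by rewrite /mnm_psum !big_geq.
  rewrite /mnm_psum !big_nat_recr //= mnm_at_reindex // [transp p r n]/transp.
  have := IH (ltnW hn); rewrite /mnm_psum.
  by case: eqP => [->|ne1]; last case: eqP => [->|ne2]; lia.
by have := psum_transp i hi; lia.
Qed.

Definition mnm_set2 (i k : nat) m (c d : nat) : 'X_{1..N} :=
  [multinom (if (x : nat) == i then c else if (x : nat) == k then d else m x) | x < N].

Lemma mnm_at_set2 i k m c d x : x < N ->
  mnm_at (mnm_set2 i k m c d) x = if x == i then c else if x == k then d else mnm_at m x.
Proof. by move=> lt; rewrite -[x]/(nat_of_ord (Ordinal lt)) mnm_at_ord mnmE -mnm_at_ord. Qed.

Definition count_gt m t := count (fun y => t < y) (mseq m).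

Lemma count_gtE m t : count_gt m t = \sum_(0 <= x < N) (t < mnm_at m x).
Proof.
rewrite /count_gt mseqE count_map -sum1_count big_mkcond /index_iota subn0 /=.
by apply: eq_bigr => x _; case: (t < mnm_at m x).
Qed.

Lemma sumn_take_decr_thresholds m k M : (forall x, mnm_at m x <= M) ->
  sumn (take k (decr (mseq m))) = \sum_(0 <= t < M) minn k (count_gt m t).
Proof.
move=> hM; rewrite (sumn_take_thresholds k (M := M)).
- by apply: eq_bigr => t _; rewrite count_decr.
- exact: sorted_decr.
by move=> x; rewrite /decr mem_sort => /(nthP 0%N) [i _ <-]; exact: hM.
Qed.

Section InteriorPair.
Variables (m : 'X_{1..N}) (i k c d : nat).
Hypotheses (i_neq_k : i != k) (lt_iN : i < N) (lt_kN : k < N).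
Hypothesis sum_cd : (c + d = mnm_at m i + mnm_at m k)%N.
Hypothesis c_inside :
  minn (mnm_at m i) (mnm_at m k) < c < maxn (mnm_at m i) (mnm_at m k).
Hypothesis d_inside :
  minn (mnm_at m i) (mnm_at m k) < d < maxn (mnm_at m i) (mnm_at m k).

Definition count_gt_off2 t := \sum_(0 <= x < N | (x != i) && (x != k)) (t < mnm_at m x).

Lemma count_gt_off2_homo : {homo count_gt_off2 : t t' / t <= t' >-> t' <= t}.
Proof.
by move=> t t' htt; apply: leq_sum => x _; case: (ltnP t' (mnm_at m x)) => //=; lia.
Qed.

Lemma count_gt_pick2 t :
  count_gt m t = (count_gt_off2 t + (t < mnm_at m i) + (t < mnm_at m k))%N.
Proof. by rewrite count_gtE (big_nat_pick2 _ i_neq_k lt_iN lt_kN). Qed.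

Lemma count_gt_set2 t :
  count_gt (mnm_set2 i k m c d) t = (count_gt_off2 t + (t < c) + (t < d))%N.
Proof.
rewrite count_gtE (big_nat_pick2 _ i_neq_k lt_iN lt_kN) !mnm_at_set2 // eqxx.
rewrite [k == i]eq_sym (negbTE i_neq_k) eqxx.
congr (_ + _ + _)%N; rewrite big_nat_cond [RHS]big_nat_cond.
apply: eq_bigr => x /andP[/andP[_ hx] /andP[h1 h2]].
by rewrite mnm_at_set2 // (negbTE h1) (negbTE h2).
Qed.

Lemma decr_set2_neq : decr (mseq (mnm_set2 i k m c d)) != decr (mseq m).
Proof.
apply/eqP => e; have := congr1 (count (fun y => maxn c d < y)) e.
by rewrite !count_decr -/(count_gt _ _) -/(count_gt m _) count_gt_pick2 count_gt_set2; lia.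
Qed.

Lemma dom_decr_set2 : Defs.dom N (decr (mseq (mnm_set2 i k m c d))) (decr (mseq m)).
Proof.
move: sum_cd c_inside d_inside; set a := mnm_at m i; set b := mnm_at m k.
move=> hsum hc hd.
set M := sumn (mseq m).
have haM : a <= M by apply: mnm_at_le_sumn.
have hbM : b <= M by apply: mnm_at_le_sumn.
have hM x : mnm_at (mnm_set2 i k m c d) x <= M.
  case: (ltnP x N) => hx; last by rewrite /mnm_at nth_default ?size_mseq.
  rewrite mnm_at_set2 //; case: eqP => _; first lia.
  by case: eqP => _; [lia|apply: mnm_at_le_sumn].
apply/forallP => n.
rewrite (sumn_take_decr_thresholds n hM).
rewrite (@sumn_take_decr_thresholds m n M (@mnm_at_le_sumn m)).
rewrite (eq_bigr _ (fun t _ => congr1 (minn n) (count_gt_set2 t))).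
rewrite (eq_bigr _ (fun t _ => congr1 (minn n) (count_gt_pick2 t))) -!/(thr_sum _ M n _ _).
have thr_sum_maxmin x y : thr_sum count_gt_off2 M n x y
                        = thr_sum count_gt_off2 M n (maxn x y) (minn x y).
  by case: (leqP x y) => h; rewrite ?(maxn_idPr (ltnW h)) ?(minn_idPl (ltnW h))
     ?(maxn_idPl h) ?(minn_idPr h) // thr_sum_sym.
rewrite (thr_sum_maxmin c d) (thr_sum_maxmin a b).
have := @thr_sum_spread _ M n (maxn c d) (minn c d) (maxn a b - maxn c d) count_gt_off2_homo.
have -> : (maxn c d + (maxn a b - maxn c d) = maxn a b)%N by lia.
have -> : (minn c d - (maxn a b - maxn c d) = minn a b)%N by lia.
by apply; lia.
Qed.

End InteriorPair.

End Exponents.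

Section CyclicIndices.
Variable N : nat.

Definition rot_idx (x : nat) : nat := if x.+1 == N then 0%N else x.+1.

(* [mnm_reindex (cycle_src p j) m] moves the entry of [m] at position [p] to
   position [j], shifting the entries in between by one. *)
Definition cycle_src (p j x : nat) : nat :=
  if x == j then p else if (p <= x) && (x < j) then x.+1
  else if (j < x) && (x <= p) then x.-1 else x.

Ltac case_ifs := repeat match goal with
  | |- context [if ?b then _ else _] =>
      lazymatch b with context [if _ then _ else _] => fail | _ =>
        let H := fresh "H" in case H : b => /= end
  end.

Lemma cycle_src_lt p j x : p < N -> j < N -> x < N -> cycle_src p j x < N.
Proof. by rewrite /cycle_src; case_ifs; lia. Qed.
Lemma cycle_srcK p j x : p < N -> j < N -> x < N -> cycle_src j p (cycle_src p j x) = x.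
Proof. by rewrite /cycle_src; case_ifs; lia. Qed.
Lemma cycle_src_id j x : cycle_src j j x = x.
Proof. by rewrite /cycle_src; case_ifs; lia. Qed.
Lemma cycle_src_jj p j : cycle_src p j j = p.
Proof. by rewrite /cycle_src eqxx. Qed.
Lemma cycle_src_rot j x : j < N -> x < N -> cycle_src 0 j x = rot_idx (cycle_src N.-1 j x).
Proof. by rewrite /cycle_src /rot_idx; case_ifs; lia. Qed.

Lemma cycle_srcS_below k j x : k < j -> cycle_src k.+1 j x = transp k k.+1 (cycle_src k j x).
Proof. by rewrite /cycle_src /transp; case_ifs; lia. Qed.
Lemma cycle_srcS_above i j x : j <= i -> cycle_src i.+1 j x = transp i i.+1 (cycle_src i j x).
Proof. by rewrite /cycle_src /transp; case_ifs; lia. Qed.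
Lemma cycle_src_transp_below k j x : k < j -> cycle_src k j x = cycle_src k.+1 j (transp k j x).
Proof. by rewrite /cycle_src /transp; case_ifs; lia. Qed.
Lemma cycle_src_transp_above i j x : j <= i ->
  cycle_src i j x = cycle_src i.+1 j (transp j i.+1 x).
Proof. by rewrite /cycle_src /transp; case_ifs; lia. Qed.
Lemma cycle_srcS_below_k k j : k < j -> cycle_src k.+1 j k = k.
Proof. by rewrite /cycle_src; case_ifs; lia. Qed.
Lemma cycle_srcS_above_iS i j : j <= i -> cycle_src i.+1 j i.+1 = i.
Proof. by rewrite /cycle_src; case_ifs; lia. Qed.

End CyclicIndices.

Import GRing.Theory.
Local Open Scope ring_scope.

Lemma telescope_sub_mul (R : comNzRingType) (x y : R) c d n :
  (x - y) * \sum_(k < n) x ^+ (c + k) * y ^+ (d + (n - k))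
  = x ^+ (c + n) * y ^+ d.+1 - x ^+ c * y ^+ (d + n).+1.
Proof.
elim: n => [|n IH]; first by rewrite big_ord0 mulr0 !addn0 subrr.
rewrite big_ord_recr /= subSnn addn1.
rewrite (eq_bigr (fun k : 'I_n => y * (x ^+ (c + k) * y ^+ (d + (n - k))))); last first.
  move=> k _; rewrite /= subSn; last exact: ltnW (ltn_ord k).
  by rewrite addnS exprS; ring.
rewrite -big_distrr /= mulrDr (mulrA (x - y) y) (mulrC (x - y) y) -mulrA IH.
by rewrite !addnS !exprS !exprD; ring.
Qed.

Section Generators.
Variable N : nat.
Implicit Types g : 'I_N.-1.

Lemma val_lo g : (lo g : nat) = g.
Proof. by []. Qed.

Lemma val_hi g : (hi g : nat) = g.+1.
Proof. by rewrite /hi val_insubd; case: ifP => // h; move: (ltn_ord g) h; lia. Qed.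

Lemma lo_neq_hi g : (lo g : nat) != hi g.
Proof. by rewrite val_hi val_lo; lia. Qed.

Lemma val_tperm (x y z : 'I_N) : val (tperm x y z) = transp x y z.
Proof.
rewrite /transp !(inj_eq val_inj).
case: (eqVneq z x) => [->|n1]; first by rewrite tpermL.
case: (eqVneq z y) => [->|n2]; first by rewrite tpermR.
by rewrite tpermD // eq_sym.
Qed.

End Generators.

(** * Divided differences *)

Section Polynomials.
Variables (K : fieldType) (q : K) (N : nat).
Local Notation X := (@mpolyX N K).
Local Notation swp := (@swp K N).
Local Notation shiftq := (@shiftq K q N).
Local Notation ddiff := (@ddiff K N).
Implicit Types (g : 'I_N.-1) (m : 'X_{1..N}) (p : {mpoly K[N]}).

Lemma prod_mpolyX_reindex (rho : 'I_N -> 'I_N) m m' : injective rho ->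
  (forall i, m' (rho i) = m i) -> \prod_(i < N) 'X_(rho i) ^+ (m i) = X m'.
Proof.
move=> hr h; rewrite [RHS]mpolyXE_id [RHS](reindex_inj hr).
by apply: eq_bigr => i _; rewrite h.
Qed.

Lemma swp0 g : swp g 0 = 0. Proof. exact: comp_mpoly0. Qed.
Lemma swpD g p1 p2 : swp g (p1 + p2) = swp g p1 + swp g p2. Proof. exact: comp_mpolyD. Qed.
Lemma swpZ g a p : swp g (a *: p) = a *: swp g p. Proof. exact: comp_mpolyZ. Qed.

Lemma swp_mpolyX g m : swp g (X m) = X (mnm_reindex (transp (lo g) (hi g)) m).
Proof.
rewrite /Defs.swp comp_mpolyX.
rewrite (eq_bigr (fun i => 'X_(tperm (lo g) (hi g) i) ^+ m i)); last first.
  by move=> i _; rewrite tnth_mktuple.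
apply: prod_mpolyX_reindex; first exact: perm_inj.
by move=> i; rewrite -mnm_at_ord mnm_at_reindex ?ltn_ord // val_tperm transpK mnm_at_ord.
Qed.

Lemma shiftq0 : shiftq 0 = 0. Proof. exact: comp_mpoly0. Qed.
Lemma shiftqD p1 p2 : shiftq (p1 + p2) = shiftq p1 + shiftq p2. Proof. exact: comp_mpolyD. Qed.
Lemma shiftqZ a p : shiftq (a *: p) = a *: shiftq p. Proof. exact: comp_mpolyZ. Qed.

Definition shiftq_coef m : K := \prod_(i < N) (if (i : nat) == 0%N then q else 1) ^+ m i.

Lemma shiftq_mpolyX m : shiftq (X m) = shiftq_coef m *: X (mnm_reindex (@rot_idx N) m).
Proof.
rewrite /Defs.shiftq comp_mpolyX.
pose rho (i : 'I_N) : 'I_N := if (i : nat) == 0%N then rev_ord i else insubd i i.-1.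
have val_rho k : nat_of_ord (rho k) = (if (k : nat) == 0%N then N.-1 else k.-1)%N.
  rewrite /rho; case: eqP => h /=; first by rewrite h; lia.
  by rewrite val_insubd; case: ifP => // h2; move: (ltn_ord k) h2; lia.
rewrite (eq_bigr (fun i : 'I_N =>
  ((if (i:nat) == 0%N then q else 1) ^+ m i) *: ('X_(rho i) ^+ m i))); last first.
  by move=> i _; rewrite tnth_mktuple /rho; case: eqP => _; rewrite ?exprZn ?expr1n ?scale1r.
rewrite scaler_prod; congr (_ *: _); apply: prod_mpolyX_reindex.
  move=> i j e; apply: ord_inj; move: (congr1 (@nat_of_ord N) e); rewrite !val_rho.
  by move: (ltn_ord i) (ltn_ord j); case: eqP => ?; case: eqP => ?; lia.
move=> i; rewrite -mnm_at_ord mnm_at_reindex ?ltn_ord // val_rho -mnm_at_ord /rot_idx.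
congr (mnm_at m _); have := ltn_ord i.
by case: (eqVneq (nat_of_ord i) 0%N) => [->|h0] /= hi; case: ifP; lia.
Qed.

Lemma mpolyX_set2 g m c d : X (mnm_set2 (lo g) (hi g) m c d)
  = X (mnm_set2 (lo g) (hi g) m 0 0) * 'X_(lo g) ^+ c * 'X_(hi g) ^+ d.
Proof.
rewrite !mpolyXn -!mpolyXD; congr mpolyX; apply: mnm_atP => x hx.
rewrite mnm_at_set2 // !mnm_atD // mnm_at_set2 // !mnm_at_mulUn //.
have ne := lo_neq_hi g.
case: (eqVneq x (lo g)) => [->|n1].
  by rewrite ?eqxx [(hi g : nat) == lo g]eq_sym (negbTE ne); lia.
by case: eqP => e2; lia.
Qed.

Lemma mnm_set2_id g m : mnm_set2 (lo g) (hi g) m (mnm_at m (lo g)) (mnm_at m (hi g)) = m.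
Proof.
apply: mnm_atP => x hx; rewrite mnm_at_set2 //.
by case: eqP => [e|_]; [subst x|case: eqP => [e|_]; [subst x|]].
Qed.

Lemma mnm_set2_swap g m : mnm_set2 (lo g) (hi g) m (mnm_at m (hi g)) (mnm_at m (lo g))
  = mnm_reindex (transp (lo g) (hi g)) m.
Proof.
apply: mnm_atP => x hx; rewrite mnm_at_set2 // mnm_at_reindex // /transp.
by case: eqP => [e|_]; [subst x|case: eqP => [e|_]; [subst x|]].
Qed.

(* [x_(i+1) (x^m - x^(s_i m)) / (x_i - x_(i+1))] written out as a geometric sum. *)
Definition ddiff_mnm g m : {mpoly K[N]} :=
  let a := mnm_at m (lo g) in let b := mnm_at m (hi g) in
  if (b <= a)%N then \sum_(k < a - b) X (mnm_set2 (lo g) (hi g) m (b + k) (a - k))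
  else - \sum_(k < b - a) X (mnm_set2 (lo g) (hi g) m (a + k) (b - k)).

Lemma ddiff_mnmP g m :
  ddiff_mnm g m * ('X_(lo g) - 'X_(hi g)) = 'X_(hi g) * (X m - swp g (X m)).
Proof.
rewrite swp_mpolyX -mnm_set2_swap /ddiff_mnm.
set a := mnm_at m (lo g); set b := mnm_at m (hi g).
set Z := X (mnm_set2 (lo g) (hi g) m 0 0); set x := 'X_(lo g); set y := 'X_(hi g).
have eXm : X m = Z * x ^+ a * y ^+ b by rewrite -mpolyX_set2 mnm_set2_id.
have sum_geom c e : (c <= e)%N ->
    \sum_(k < e - c) X (mnm_set2 (lo g) (hi g) m (c + k) (e - k))
    = Z * \sum_(k < e - c) x ^+ (c + k) * y ^+ (c + (e - c - k)).
  move=> hce; rewrite big_distrr; apply: eq_bigr => k _; rewrite mpolyX_set2 -/Z -/x -/y.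
  rewrite (_ : (e - k = c + (e - c - k))%N); first by rewrite -mulrA.
  by have := ltn_ord k; lia.
rewrite eXm mpolyX_set2 -/Z -/x -/y; case: leqP => hab.
  have Te := telescope_sub_mul x y b b (a - b); rewrite subnKC // in Te.
  by rewrite sum_geom // -mulrA [_ * (x - y)]mulrC Te !exprS; ring.
have Te := telescope_sub_mul x y a a (b - a); rewrite subnKC ?(ltnW hab) // in Te.
rewrite sum_geom ?(ltnW hab) //; set S := (\sum_(k < b - a) _).
have -> : - (Z * S) * (x - y) = - Z * ((x - y) * S) by ring.
by rewrite Te !exprS; ring.
Qed.

Lemma mpolyX_sub_neq0 g : 'X_(lo g) - 'X_(hi g) != 0 :> {mpoly K[N]}.
Proof.
rewrite subr_eq0; apply/negP => /eqP e.
have := congr1 (mcoeff U_(lo g)) e; rewrite !mcoeffX eqxx.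
have hne : hi g != lo g.
  by apply/eqP => /(congr1 (@nat_of_ord N)); rewrite val_hi /=; lia.
have -> : (U_(hi g) == U_(lo g))%MM = false.
  by apply/negbTE/eqP => /mnmP /(_ (lo g)); rewrite !mnm1E eqxx (negbTE hne).
by move/eqP; rewrite oner_eq0.
Qed.

Lemma ddiff_exists g p : exists r, r * ('X_(lo g) - 'X_(hi g)) = 'X_(hi g) * (p - swp g p).
Proof.
elim/mpolyind: p => [|c m p _ _ [r hr]].
  by exists 0; rewrite swp0 subrr mulr0 mul0r.
exists (c *: ddiff_mnm g m + r); rewrite mulrDl hr -scalerAl ddiff_mnmP swpD swpZ.
by rewrite scalerAr -mulrDr scalerBr opprD addrACA.
Qed.

Lemma ddiffP g p : ddiff g p * ('X_(lo g) - 'X_(hi g)) = 'X_(hi g) * (p - swp g p).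
Proof. exact: (epsilon_spec _ _ (ddiff_exists g p)). Qed.

Lemma ddiff_unique g p r :
  r * ('X_(lo g) - 'X_(hi g)) = 'X_(hi g) * (p - swp g p) -> ddiff g p = r.
Proof.
move=> hr; apply/eqP; rewrite -subr_eq0.
have : (ddiff g p - r) * ('X_(lo g) - 'X_(hi g)) = 0 by rewrite mulrBl ddiffP hr subrr.
by move/eqP; rewrite mulf_eq0 (negbTE (mpolyX_sub_neq0 g)) orbF.
Qed.

Lemma ddiff0 g : ddiff g 0 = 0.
Proof. by apply: ddiff_unique; rewrite mul0r swp0 subrr mulr0. Qed.

Lemma ddiffD g p1 p2 : ddiff g (p1 + p2) = ddiff g p1 + ddiff g p2.
Proof.
apply: ddiff_unique; rewrite mulrDl !ddiffP swpD -mulrDr.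
by rewrite opprD addrACA.
Qed.

Lemma ddiffZ g a p : ddiff g (a *: p) = a *: ddiff g p.
Proof. by apply: ddiff_unique; rewrite -scalerAl ddiffP swpZ -scalerBr scalerAr. Qed.

Lemma ddiff_mpolyX g m : ddiff g (X m) = ddiff_mnm g m.
Proof. exact/ddiff_unique/ddiff_mnmP. Qed.

End Polynomials.

(** * The operators on M_lambda *)

Section Operators.
Variables (K : fieldType) (q s : K) (N : nat) (lam : seq nat).
Local Notation V := (Vec K N lam).
Local Notation Md := {ffun Tab N lam -> {mpoly K[N]}}.
Local Notation X := (@mpolyX N K).
Local Notation actT := (@actT K s N lam).
Local Notation tens := (@tens K N lam).
Local Notation opT := (@opT K s N lam).
Local Notation opTinv := (@opTinv K s N lam).
Local Notation opw := (@opw K q s N lam).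
Local Notation ddiff_mnm := (@ddiff_mnm K N).
Implicit Types (g : 'I_N.-1) (u : V) (F : Md) (m : 'X_{1..N}) (p : {mpoly K[N]}).

Lemma actT0 g : actT g 0 = 0.
Proof. by rewrite /Defs.actT big1 // => t _; rewrite ffunE scale0r. Qed.

Lemma actTD g u1 u2 : actT g (u1 + u2) = actT g u1 + actT g u2.
Proof. by rewrite /Defs.actT -big_split; apply: eq_bigr => t _; rewrite ffunE scalerDl. Qed.

Lemma actTZ g a u : actT g (a *: u) = a *: actT g u.
Proof. by rewrite /Defs.actT scaler_sumr; apply: eq_bigr => t _; rewrite ffunE scalerA. Qed.

Lemma actTE g u (t' : Tab N lam) : actT g u t' = \sum_(t : Tab N lam) u t * tabT s g t t'.
Proof. by rewrite /Defs.actT sum_ffunE; apply: eq_bigr => t _; rewrite ffunE. Qed.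

Definition actW (l : seq 'I_N.-1) u : V := foldl (fun u g => actT g u) u l.

Lemma actW0 l : actW l 0 = 0.
Proof. by elim: l => [|g l IH] //=; rewrite actT0. Qed.

Lemma actWD l u1 u2 : actW l (u1 + u2) = actW l u1 + actW l u2.
Proof. by elim: l u1 u2 => [|g l IH] u1 u2 //=; rewrite actTD IH. Qed.

Lemma actWZ l a u : actW l (a *: u) = a *: actW l u.
Proof. by elim: l u => [|g l IH] u //=; rewrite actTZ IH. Qed.

Lemma vec_tbasisE u : u = \sum_(t : Tab N lam) u t *: tbasis K t.
Proof.
apply/ffunP => t'; rewrite sum_ffunE (bigD1 t') //= big1 ?addr0.
  by rewrite !ffunE eqxx /GRing.scale /= mulr1.
by move=> t ht; rewrite !ffunE eq_sym (negbTE ht) /GRing.scale /= mulr0.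
Qed.

Lemma actW_tbasis l u : actW l u = \sum_(t : Tab N lam) u t *: actW l (tbasis K t).
Proof.
rewrite {1}(vec_tbasisE u) (big_morph (actW l) (actWD l) (actW0 l)).
by apply: eq_bigr => t _; rewrite actWZ.
Qed.

Lemma actH_cat (h1 h2 : hecke K N) u :
  actH s (h1 ++ h2) u = actH s h1 u + actH s h2 u.
Proof. by rewrite /Defs.actH big_cat. Qed.

Lemma tens0l u : tens 0 u = 0.
Proof. by apply/ffunP => t; rewrite !ffunE scaler0. Qed.

Lemma tens0r p : tens p 0 = 0.
Proof. by apply/ffunP => t; rewrite !ffunE scale0r. Qed.

Lemma tensDl p1 p2 u : tens (p1 + p2) u = tens p1 u + tens p2 u.
Proof. by apply/ffunP => t; rewrite !ffunE scalerDr. Qed.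

Lemma tensDr p u1 u2 : tens p (u1 + u2) = tens p u1 + tens p u2.
Proof. by apply/ffunP => t; rewrite !ffunE scalerDl. Qed.

Lemma tensZr p a u : tens p (a *: u) = a *: tens p u.
Proof. by apply/ffunP => t; rewrite !ffunE scalerA. Qed.

Lemma tensNl p u : tens (- p) u = tens p (- u).
Proof. by apply/ffunP => t; rewrite !ffunE scalerN scaleNr. Qed.

Lemma tens_suml (I : Type) (r : seq I) (P : I -> {mpoly K[N]}) u :
  tens (\sum_(i <- r) P i) u = \sum_(i <- r) tens (P i) u.
Proof. exact: (big_morph (tens^~ u) (fun p1 p2 => tensDl p1 p2 u) (tens0l u)). Qed.

Lemma opT0 g : opT g 0 = 0.
Proof.
apply/ffunP => t'; rewrite !ffunE ddiff0 scaler0 add0r big1 // => t _.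
by rewrite ffunE swp0 scaler0.
Qed.

Lemma opTD g F1 F2 : opT g (F1 + F2) = opT g F1 + opT g F2.
Proof.
apply/ffunP => t'; rewrite !ffunE ddiffD scalerDr addrACA -big_split /=; congr (_ + _).
by apply: eq_bigr => t _; rewrite ffunE swpD scalerDr.
Qed.

Lemma opT_tens g m u : opT g (tens (X m) u)
  = tens (ddiff_mnm g m) ((1 - s) *: u)
    + tens (X (mnm_reindex (transp (lo g) (hi g)) m)) (actT g u).
Proof.
apply/ffunP => t'; rewrite !ffunE ddiffZ ddiff_mpolyX scalerA actTE scaler_suml.
congr (_ + _); apply: eq_bigr => t _.
by rewrite /Defs.tens ffunE swpZ swp_mpolyX scalerA mulrC.
Qed.

Lemma opTinv0 g : opTinv g 0 = 0.
Proof. by rewrite /Defs.opTinv opT0 scaler0 addr0 scaler0. Qed.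

Lemma opTinvD g F1 F2 : opTinv g (F1 + F2) = opTinv g F1 + opTinv g F2.
Proof. by rewrite /Defs.opTinv opTD [(1 - s) *: _]scalerDr addrACA -scalerDr. Qed.

Lemma opw0 : opw 0 = 0.
Proof. by apply/ffunP => t'; rewrite !ffunE big1 // => t _; rewrite ffunE shiftq0 scaler0. Qed.

Lemma opwD F1 F2 : opw (F1 + F2) = opw F1 + opw F2.
Proof.
apply/ffunP => t'; rewrite !ffunE -big_split /=.
by apply: eq_bigr => t _; rewrite ffunE shiftqD scalerDr.
Qed.

Lemma opw_tens m u : opw (tens (X m) u)
  = tens (X (mnm_reindex (@rot_idx N) m)) (shiftq_coef q m *: actW (enum 'I_N.-1) u).
Proof.
apply/ffunP => t'; rewrite !ffunE actW_tbasis sum_ffunE scaler_sumr scaler_suml.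
apply: eq_bigr => t _; rewrite !ffunE shiftqZ shiftq_mpolyX !scalerA ?ffunE.
by congr (_ *: _); rewrite /GRing.scale /=; ring.
Qed.

End Operators.

Lemma filter_iota_ltn n k : (k <= n)%N -> [seq x <- iota 0 n | (x < k)%N] = iota 0 k.
Proof.
move=> hk; rewrite -(subnKC hk) iotaD filter_cat add0n.
rewrite (eq_in_filter (a2 := predT)) ?filter_predT; last by move=> x; rewrite mem_iota => /andP[].
rewrite (eq_in_filter (a2 := pred0)) ?filter_pred0 ?cats0 // => x.
by rewrite mem_iota => /andP[h _]; rewrite ltnNge h.
Qed.

Lemma filter_iota_geq n k : (k <= n)%N -> [seq x <- iota 0 n | (k <= x)%N] = iota k (n - k).
Proof.
move=> hk; rewrite -{1}(subnKC hk) iotaD filter_cat add0n.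
rewrite (eq_in_filter (a2 := pred0)) ?filter_pred0; last first.
  by move=> x; rewrite mem_iota => /andP[_ h]; rewrite leqNgt h.
by rewrite (eq_in_filter (a2 := predT)) ?filter_predT // => x; rewrite mem_iota => /andP[].
Qed.

(** * Triangularity of Xi_j *)

Section Triangularity.
Variables (K : fieldType) (q s : K) (N : nat) (lam : seq nat) (T : Tab N lam).
Local Notation V := (Vec K N lam).
Local Notation Md := {ffun Tab N lam -> {mpoly K[N]}}.
Local Notation X := (@mpolyX N K).
Local Notation actT := (@actT K s N lam).
Local Notation actH := (@actH K s N lam).
Local Notation actW := (@actW K s N lam).
Local Notation tens := (@tens K N lam).
Local Notation opT := (@opT K s N lam).
Local Notation opTinv := (@opTinv K s N lam).
Local Notation opw := (@opw K q s N lam).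
Local Notation ddiff_mnm := (@ddiff_mnm K N).
Implicit Types (g : 'I_N.-1) (u : V) (F : Md) (m : 'X_{1..N}).

Definition in_TH u : Prop := exists h : hecke K N, actH h (tbasis K T) = u.

Lemma in_TH_tbasis : in_TH (tbasis K T).
Proof. by exists [:: (1, [::])]; rewrite /Defs.actH big_seq1 /= scale1r. Qed.

Lemma in_THZ a u : in_TH u -> in_TH (a *: u).
Proof.
move=> [h <-]; exists [seq (a * p.1, p.2) | p <- h].
by rewrite /Defs.actH big_map scaler_sumr; apply: eq_bigr => p _ /=; rewrite scalerA.
Qed.

Lemma in_THN u : in_TH u -> in_TH (- u).
Proof. by rewrite -scaleN1r; apply: in_THZ. Qed.

Lemma in_TH_actT g u : in_TH u -> in_TH (actT g u).
Proof.
move=> [h <-]; exists [seq (p.1, rcons p.2 g) | p <- h].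
rewrite /Defs.actH big_map (big_morph (actT g) (actTD s g) (actT0 s lam g)).
by apply: eq_bigr => p _ /=; rewrite foldl_rcons actTZ.
Qed.

Lemma in_TH_actW l u : in_TH u -> in_TH (actW l u).
Proof. by elim: l u => [|g l IH] u //= hu; apply/IH/in_TH_actT. Qed.

(* [Span P F]: [F] is a finite sum of terms [x^m (x) u] with [P m] and [u] in
   the cyclic submodule [T H_N(s)]. *)
Definition Span (P : 'X_{1..N} -> Prop) F : Prop :=
  exists l : seq ('X_{1..N} * V), F = \sum_(x <- l) tens (X x.1) x.2 /\
    forall x, x \in l -> P x.1 /\ in_TH x.2.

Lemma Span0 P : Span P 0.
Proof. by exists [::]; rewrite big_nil. Qed.

Lemma SpanD P F1 F2 : Span P F1 -> Span P F2 -> Span P (F1 + F2).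
Proof.
move=> [l1 [-> h1]] [l2 [-> h2]]; exists (l1 ++ l2); rewrite big_cat; split => // x.
by rewrite mem_cat => /orP[/h1|/h2].
Qed.

Lemma SpanZ P a F : Span P F -> Span P (a *: F).
Proof.
move=> [l [-> h]]; exists [seq (x.1, a *: x.2) | x <- l]; split.
  by rewrite big_map scaler_sumr; apply: eq_bigr => x _; rewrite tensZr.
by move=> y /mapP[x /h[h1 h2] ->]; split => //; apply: in_THZ.
Qed.

Lemma Span_tens P m u : P m -> in_TH u -> Span P (tens (X m) u).
Proof.
by move=> hm hu; exists [:: (m, u)]; rewrite big_seq1; split => // x; rewrite inE => /eqP ->.
Qed.

Lemma Span_sum P (I : Type) (r : seq I) (F : I -> Md) :
  (forall i, Span P (F i)) -> Span P (\sum_(i <- r) F i).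
Proof.
move=> h; elim: r => [|i r IH]; first by rewrite big_nil; apply: Span0.
by rewrite big_cons; apply: SpanD.
Qed.

Lemma Span_weaken (P P' : 'X_{1..N} -> Prop) F :
  (forall m, P m -> P' m) -> Span P F -> Span P' F.
Proof. by move=> hP [l [-> h]]; exists l; split => // x /h [/hP]. Qed.

Lemma Span_additive P P' (O : Md -> Md) :
  O 0 = 0 -> {morph O : F1 F2 / F1 + F2} ->
  (forall m u, P m -> in_TH u -> Span P' (O (tens (X m) u))) ->
  forall F, Span P F -> Span P' (O F).
Proof.
move=> O0 OD hO F [l [-> hl]]; rewrite (big_morph O OD O0).
elim: l hl => [|x l IH] hl; first by rewrite big_nil; apply: Span0.
rewrite big_cons; apply: SpanD; first by have [] := hl x (mem_head _ _); apply: hO.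
by apply: IH => y hy; apply: hl; rewrite inE hy orbT.
Qed.

Section DividedDifference.
Variables (P : 'X_{1..N} -> Prop) (g : 'I_N.-1) (m : 'X_{1..N}) (u : V).
Hypothesis u_in_TH : in_TH u.
Local Notation a := (mnm_at m (lo g)).
Local Notation b := (mnm_at m (hi g)).
Hypothesis P_inside : forall c d, (c + d = a + b)%N ->
  (minn a b < c < maxn a b)%N -> (minn a b < d < maxn a b)%N ->
  P (mnm_set2 (lo g) (hi g) m c d).

Lemma Span_ddiff_mnm : P (mnm_reindex (transp (lo g) (hi g)) m) -> ((a < b)%N -> P m) ->
  Span P (tens (ddiff_mnm g m) u).
Proof.
move=> P_swap P_self; rewrite /ddiff_mnm; case: leqP => hab.
  rewrite tens_suml; apply: Span_sum => k; apply: Span_tens => //.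
  case: (eqVneq (k : nat) 0%N) => [->|kn0]; first by rewrite addn0 subn0 mnm_set2_swap.
  by apply: P_inside; have := ltn_ord k; lia.
rewrite tensNl tens_suml; apply: Span_sum => k; apply: Span_tens; last exact: in_THN.
case: (eqVneq (k : nat) 0%N) => [->|kn0]; first by rewrite addn0 subn0 mnm_set2_id; apply: P_self.
by apply: P_inside; have := ltn_ord k; lia.
Qed.

(* For [a < b] the sum defining the divided difference starts with [- x^m],
   which the added [x^m] cancels. *)
Lemma Span_ddiff_mnm_add_self : (a < b)%N -> Span P (tens (ddiff_mnm g m + X m) u).
Proof.
move=> hab; rewrite /ddiff_mnm leqNgt hab /=.
case hn : (b - a)%N => [|n]; first lia.
rewrite big_ord_recl /= addn0 subn0 mnm_set2_id.
set S := \sum_(i < n) _; rewrite (_ : - (X m + S) + X m = - S); last by ring.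
rewrite tensNl tens_suml; apply: Span_sum => k; apply: Span_tens; last exact: in_THN.
by apply: P_inside; move: hn (ltn_ord k); rewrite /= /bump /=; lia.
Qed.

End DividedDifference.

Variables (v : 'X_{1..N}) (j : nat).
Hypothesis lt_jN : (j < N)%N.

(* The invariant carried through [Xi_j]: [p] is the current position of the
   exponent that started at position [j], and moving it back to [j] must give
   an exponent below [v]. *)
Definition unshift p m := mnm_reindex (cycle_src p j) m.
Definition below_at p m : Prop := tle (unshift p m) v.

Lemma decr_unshift p m : (p < N)%N -> decr (mseq (unshift p m)) = decr (mseq m).
Proof.
move=> hp; apply: (decr_mnm_reindex (g := cycle_src j p)) => x hx.
- exact: cycle_src_lt.
- exact: cycle_src_lt.
- exact: (cycle_srcK (N := N)).
- exact: (cycle_srcK (N := N)).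
Qed.

Lemma below_at_set2 g m c d : below_at (hi g) m ->
  (c + d = mnm_at m (lo g) + mnm_at m (hi g))%N ->
  (minn (mnm_at m (lo g)) (mnm_at m (hi g)) < c < maxn (mnm_at m (lo g)) (mnm_at m (hi g)))%N ->
  (minn (mnm_at m (lo g)) (mnm_at m (hi g)) < d < maxn (mnm_at m (lo g)) (mnm_at m (hi g)))%N ->
  below_at (lo g) (mnm_set2 (lo g) (hi g) m c d).
Proof.
move=> hI hs hc hd; rewrite /below_at; apply: (tle_trans_lt_decr _ _ hI);
  rewrite !decr_unshift ?ltn_ord //.
- exact: decr_set2_neq (lo_neq_hi g) (ltn_ord _) (ltn_ord _) hs hc hd.
- exact: dom_decr_set2 (lo_neq_hi g) (ltn_ord _) (ltn_ord _) hs hc hd.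
Qed.

Lemma unshift_lo_transp g m : (hi g <= j)%N || (j <= lo g)%N ->
  unshift (lo g) (mnm_reindex (transp (lo g) (hi g)) m) = unshift (hi g) m.
Proof.
move=> hg; rewrite /unshift mnm_reindex_comp; last by move=> x hx; apply: cycle_src_lt.
apply: mnm_reindex_ext => x hx; rewrite val_hi val_lo.
case/orP: hg; rewrite ?val_hi => hg; first by rewrite cycle_srcS_below.
by rewrite cycle_srcS_above.
Qed.

Lemma below_at_lo_below g m : (hi g <= j)%N -> (mnm_at m (hi g) <= mnm_at m (lo g))%N ->
  below_at (hi g) m -> below_at (lo g) m.
Proof.
rewrite /below_at => h hab.
have -> : unshift (lo g) m = mnm_reindex (transp (lo g) j) (unshift (hi g) m).
  rewrite /unshift mnm_reindex_comp; last by move=> x hx; apply: transp_lt.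
  by apply: mnm_reindex_ext => x hx; rewrite val_hi val_lo cycle_src_transp_below // -val_hi.
apply: tle_trans_same_decr; first by rewrite decr_reindex_transp ?ltn_ord.
apply: dom_reindex_transp => //; first by move: h; rewrite val_hi.
rewrite /unshift !mnm_at_reindex ?ltn_ord // cycle_src_jj val_hi val_lo cycle_srcS_below_k.
- by rewrite -val_hi.
- by move: h; rewrite val_hi.
Qed.

Lemma below_at_lo_above g m : (j <= lo g)%N -> (mnm_at m (lo g) <= mnm_at m (hi g))%N ->
  below_at (hi g) m -> below_at (lo g) m.
Proof.
rewrite /below_at => h hab.
have -> : unshift (lo g) m = mnm_reindex (transp j (hi g)) (unshift (hi g) m).
  rewrite /unshift mnm_reindex_comp; last by move=> x hx; apply: transp_lt.
  by apply: mnm_reindex_ext => x hx; rewrite val_hi val_lo cycle_src_transp_above.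
apply: tle_trans_same_decr; first by rewrite decr_reindex_transp ?ltn_ord.
apply: dom_reindex_transp; [by move: h; rewrite val_hi val_lo; lia | exact: ltn_ord |].
by rewrite /unshift !mnm_at_reindex // cycle_src_jj val_hi cycle_srcS_above_iS // -val_hi.
Qed.

Lemma Span_opT g F : (j <= lo g)%N ->
  Span (below_at (hi g)) F -> Span (below_at (lo g)) (opT g F).
Proof.
move=> h; apply: Span_additive; [exact: opT0 | exact: opTD | move=> m u hm hu].
have hsw : below_at (lo g) (mnm_reindex (transp (lo g) (hi g)) m).
  by rewrite /below_at unshift_lo_transp ?h ?orbT.
rewrite opT_tens; apply: SpanD; last by apply: Span_tens => //; apply: in_TH_actT.
apply: Span_ddiff_mnm => //; first exact: in_THZ.
  by move=> c d; apply: below_at_set2.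
by move=> hab; apply: below_at_lo_above => //; apply: ltnW.
Qed.

Lemma Span_opTinv g F : (hi g <= j)%N ->
  Span (below_at (hi g)) F -> Span (below_at (lo g)) (opTinv g F).
Proof.
move=> h; apply: Span_additive; [exact: opTinv0 | exact: opTinvD | move=> m u hm hu].
have hsw : below_at (lo g) (mnm_reindex (transp (lo g) (hi g)) m).
  by rewrite /below_at unshift_lo_transp ?h.
have hmid c d := @below_at_set2 g m c d hm.
rewrite /Defs.opTinv opT_tens; apply: SpanZ.
have hswT : Span (below_at (lo g))
    (tens (X (mnm_reindex (transp (lo g) (hi g)) m)) (actT g u)).
  by apply: Span_tens => //; apply: in_TH_actT.
case: (leqP (mnm_at m (hi g)) (mnm_at m (lo g))) => hab.
  apply: SpanD; first apply: SpanD => //.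
    by apply: Span_ddiff_mnm => //; [exact: in_THZ | lia].
  by apply/SpanZ/Span_tens => //; apply: below_at_lo_below.
rewrite -tensZr addrAC -tensDl; apply: SpanD => //.
by apply: Span_ddiff_mnm_add_self => //; exact: in_THZ.
Qed.

Lemma Span_opw F : Span (below_at 0) F -> Span (below_at N.-1) (opw F).
Proof.
apply: Span_additive; [exact: opw0 | exact: opwD | move=> m u hm hu].
rewrite opw_tens; apply: Span_tens; last by apply/in_THZ/in_TH_actW.
rewrite /below_at /unshift mnm_reindex_comp; last by move=> x hx; apply: cycle_src_lt; lia.
by rewrite (mnm_reindex_ext _ (fun x hx => esym (cycle_src_rot lt_jN hx))).
Qed.

Lemma unshift_id m : unshift j m = m.
Proof. by apply: mnm_reindex_id => x _; apply: cycle_src_id. Qed.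

Lemma Span_opTinv_word (l : seq 'I_N.-1) F p : map val l = rev (iota 0 p) -> (p <= j)%N ->
  Span (below_at p) F -> Span (below_at 0) (foldl (fun F g => opTinv g F) F l).
Proof.
elim: l F p => [|g l IH] F p /=.
  by case: p => [|p] //; rewrite -addn1 iotaD rev_cat.
case: p => [|p] //; rewrite -addn1 iotaD rev_cat /= add0n => -[hg hl] hp hF.
apply: (IH _ p hl); first lia.
have hlo : (lo g : nat) = p by rewrite val_lo.
have hhi : (hi g : nat) = p.+1 by rewrite val_hi hg.
by rewrite -hlo; apply: Span_opTinv; rewrite hhi // -addn1.
Qed.

Lemma Span_opT_word (l : seq 'I_N.-1) F p : map val l = rev (iota j (p - j)) -> (j <= p)%N ->
  Span (below_at p) F -> Span (below_at j) (foldl (fun F g => opT g F) F l).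
Proof.
elim: l F p => [|g l IH] F p /= hl hp hF.
  have e : (p - j = 0)%N by move/(congr1 size): hl; rewrite size_rev size_iota.
  by have -> : j = p by lia.
case e : (p - j)%N hl => [|n] //; rewrite -addn1 iotaD rev_cat /= => -[hg hl].
apply: (IH _ (j + n)%N); [by rewrite addKn | lia |].
have hlo : (lo g : nat) = (j + n)%N by rewrite val_lo.
have hhi : (hi g : nat) = p by rewrite val_hi hg; lia.
by rewrite -hlo; apply: Span_opT; rewrite ?hhi // hlo leq_addr.
Qed.

Lemma Span_opXi (jo : 'I_N) F : (jo : nat) = j ->
  Span (below_at j) F -> Span (fun w => tle w v) (opXi q s jo F).
Proof.
move=> ej hF; apply: SpanZ.
apply: (Span_weaken (P := below_at j)) => [m|]; first by rewrite /below_at unshift_id.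
have le_jo : (jo <= N.-1)%N by move: (ltn_ord jo); lia.
apply: (Span_opT_word (p := N.-1)); [|by rewrite -ej|apply: Span_opw].
  rewrite map_rev -(filter_map val (fun x : nat => (jo <= x)%N)) val_enum_ord.
  by rewrite filter_iota_geq // -ej.
apply: (Span_opTinv_word (p := j)) => //.
by rewrite map_rev -(filter_map val (fun x : nat => (x < jo)%N)) val_enum_ord filter_iota_ltn // -ej.
Qed.

Lemma Span_tle_collect F : Span (fun w => tle w v) F ->
  exists H : 'X_{1..N} -> hecke K N, (forall w, ~~ tle w v -> H w = [::]) /\
    F = \sum_(w : 'X_{1..N < (mdeg v).+1}) tens (X w) (actH (H w) (tbasis K T)).
Proof.
move=> [l [-> hl]]; elim: l hl => [|x l IH] hl.
  exists (fun _ => [::]); split => //; rewrite big_nil big1 // => w _.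
  by rewrite /Defs.actH big_nil tens0r.
have [hx1 [h hh]] := hl x (mem_head _ _).
rewrite big_cons; have [H [H0 ->]] : exists H : 'X_{1..N} -> hecke K N, (forall w, ~~ tle w v -> H w = [::]) /\
    \sum_(y <- l) tens (X y.1) y.2
    = \sum_(w : 'X_{1..N < (mdeg v).+1}) tens (X w) (actH (H w) (tbasis K T)).
  by apply: IH => y hy; apply: hl; rewrite inE hy orbT.
exists (fun w => if w == x.1 then h ++ H w else H w); split.
  by move=> w hw; case: eqP => [e|_]; [move: hw; rewrite e hx1 | exact: H0].
have hb : (mdeg x.1 < (mdeg v).+1)%N by rewrite ltnS; apply: tle_mdeg.
rewrite (bigD1 (BMultinom hb)) //= [in RHS](bigD1 (BMultinom hb)) //= eqxx.
rewrite actH_cat hh tensDr -addrA; congr (_ + (_ + _)).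
apply: eq_bigr => w hw; suff /negbTE-> : (w : 'X_{1..N}) != x.1 by [].
by move: hw; apply: contra => /eqP e; apply/eqP/val_inj.
Qed.

Lemma Span_tle_decomp F : Span (fun w => tle w v) F ->
  exists H : 'X_{1..N} -> hecke K N,
    F = tens (X v) (actH (H v) (tbasis K T))
      + \sum_(w : 'X_{1..N < (mdeg v).+1} | tlt w v)
          tens (X (w : 'X_{1..N})) (actH (H w) (tbasis K T)).
Proof.
move=> /Span_tle_collect [H [H0 ->]]; exists H.
rewrite (bigD1 (BMultinom (ltnSn (mdeg v)))) //=; congr (_ + _).
rewrite [RHS]big_mkcond [LHS]big_mkcond; apply: eq_bigr => w _.
case: (boolP (tle w v)) => hw; first by rewrite /tlt hw -(inj_eq val_inj).
by rewrite H0 // /Defs.actH big_nil tens0r; case: ifP; case: ifP.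
Qed.

End Triangularity.

Theorem theorem3p4 (N : nat) (HN : (2 <= N)%N) (lam : seq nat)
    (Hlam : is_partition N lam) (v : 'X_{1..N}) (T : Tab N lam) (jj : 'I_N) :
  exists H : 'X_{1..N} -> hecke KK N,
    opXi qK sK jj (tens 'X_[v] (tbasis KK T))
    = tens 'X_[v] (actH sK (H v) (tbasis KK T))
      + \sum_(w : 'X_{1..N < (mdeg v).+1} | tlt w v)
          tens 'X_[(w : 'X_{1..N})] (actH sK (H w) (tbasis KK T)).
Proof.
apply: Span_tle_decomp; apply: (Span_opXi qK (ltn_ord jj)) => //.
apply: Span_tens; last exact: in_TH_tbasis.
by rewrite /below_at unshift_id; apply: tle_refl.
Qed.
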